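(* In the setting below, for all $u\ne v$ in $V$ and all integers $k\ge184$, $$\nu\big(k_{u,v}(P)+k_{v,u}(P)=k,\ |k_{u,v}(P)-k_{v,u}(P)|\ge k/3\big)\le\frac12\,\nu\big(k_{u,v}(P)+k_{v,u}(P)=k\big).$$
   Context: Let $G=G(V)$ be a finite connected network with symmetric conductances $c_{x,y}\ge0$, $c_x=\sum_yc_{x,y}$; $v_0\in V$; $\ell_v>0$ for $v\in V$, $t=\ell_{v_0}$, $\Gamma=\{L^v_{\tau(t)}=\ell_v\text{ for }v\ne v_0\}$. The continuous-time walk started at $v_0$ jumps from $x$ to $y$ with probability $c_{x,y}/c_x$ after i.i.d. mean-one exponential holding times; $L^v_s=\frac1{c_v}\int_0^s\mathbf 1_{\{X_r=v\}}dr$; $\tau(t)=\inf\{s:L^{v_0}_s>t\}$. $\mathcal P$ is the embedded jump path (successive distinct positions) up to $\tau(t)$; $\Omega$ is the set of paths from $v_0$ to $v_0$ visiting every vertex; $k_{u,v}(P)$ counts traversals of directed edge $\langle u,v\rangle$. $\nu$ is the conditional law of $\mathcal P$ given $\Gamma$ on $\Omega$: $\nu(A)=\sum_{P\in A}\mu(\mathcal P=P,\Gamma)/\sum_{P\in\Omega}\mu(\mathcal P=P,\Gamma)$, with $\mu(\mathcal P=P,\Gamma)=\mathbb P(\mathcal P=P)f_P$ and $f_P$ the conditional density of $(L^v_{\tau(t)})_{v\ne v_0}$ at $(\ell_v)_{v\ne v_0}$ given $\mathcal P=P$. *)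

From HB Require Import structures.
From mathcomp Require Import all_boot all_order all_algebra.
From mathcomp Require Import all_classical all_reals.
From mathcomp Require Import ereal esum.
From mathcomp Require Import sequences.
From mathcomp.analysis Require Import exp.

Set Implicit Arguments.
Unset Strict Implicit.
Unset Printing Implicit Defensive.
Import Order.TTheory GRing.Theory Num.Theory.
Local Open Scope ring_scope.
Local Open Scope classical_set_scope.

Section Network.
Variables (R : realType) (V : finType) (c : V -> V -> R).

Definition connected_network : Prop :=
  forall x y : V, connect [rel a b | 0 < c a b] x y.

(* Equal to
   c_x = \sum_y c_{x,y} when there are no self-loops; with self-loops the
   holding of the embedded (distinct-positions) path at x has this rate. *)
Definition cout (x : V) : R := \sum_(y | y != x) c x y.

(* Transition probability of the embedded jump path (successive distinct
   positions). *)
Definition pjump (x y : V) : R := if x == y then 0 else c x y / cout x.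

(* Paths are sequences of positions (including the start). *)
Definition steps (P : seq V) : seq (V * V) := zip P (behead P).

Definition kuv (u v : V) (P : seq V) : nat := count (pred1 (u, v)) (steps P).

Definition Omega (v0 : V) : set (seq V) :=
  [set P | [/\ head v0 P = v0, last v0 P = v0, (size P > 0)%N &
            forall v : V, v \in P]].

(* P(path = P): product of jump probabilities times the probability that
   the v0-local time runs out exactly during the last visit to v0, i.e.
   that the number of completed v0-holding periods (each an exponential of
   rate cout v0 in the local-time scale) before t equals m. *)
Definition path_prob (v0 : V) (t : R) (P : seq V) : R :=
  let m := (count (pred1 v0) P).-1 in
  (\prod_(e <- steps P) pjump e.1 e.2) *
  (expR (- (cout v0 * t)) * (cout v0 * t) ^+ m / (m`!)%:R).

Definition gamma_dens (n : nat) (r l : R) : R :=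
  if n is n'.+1 then r ^+ n * l ^+ n' * expR (- (r * l)) / (n'`!)%:R else 0.

(* f_P: conditional density of (L^v_{tau(t)})_{v <> v0} at (ell_v) given
   path = P: independent Gamma(n_v, cout v), n_v = visits of v in P. *)
Definition fP (v0 : V) (ell : V -> R) (P : seq V) : R :=
  \prod_(v | v != v0) gamma_dens (count (pred1 v) P) (cout v) (ell v).

Definition muPG (v0 : V) (ell : V -> R) (P : seq V) : R :=
  path_prob v0 (ell v0) P * fP v0 ell P.

Definition nu (v0 : V) (ell : V -> R) (A : set (seq V)) : R :=
  fine (\esum_(P in A `&` Omega v0) (muPG v0 ell P)%:E) /
  fine (\esum_(P in Omega v0) (muPG v0 ell P)%:E).

End Network.

(* Cut a path at its visits to [u]. The traversals of [<u,v>] and [<v,u>] are made by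
   the excursions from [u] that leave, resp. return, through [v] (and by the two end
   pieces). Reversing an excursion keeps the multiset of visited vertices and, the
   conductances being symmetric, its jump probability, hence the weight [muPG]. An
   excursion using exactly one of the two edges can thus be flipped to move one unit of
   [k_{u,v} - k_{v,u}] to the other side without changing [k_{u,v} + k_{v,u}].
   For the [a] flippable excursions of a path in the fibre [k_{u,v} + k_{v,u} = k], a
   second moment bound shows that at most half of the [2^a] orientations are unbalanced
   ([|k_{u,v} - k_{v,u}| >= k/3]); matching the unbalanced orientations injectively with
   balanced ones gives a weight-preserving injection of the unbalanced part of the fibre
   into its balanced part. *)

From HB Require Import structures.
From mathcomp Require Import all_boot all_order all_algebra.
From mathcomp Require Import all_classical all_reals.
From mathcomp Require Import ereal esum.
From mathcomp Require Import sequences.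
From mathcomp.analysis Require Import exp.
From mathcomp Require Import zify ring lra.
Import Order.TTheory GRing.Theory Num.Theory.

Set Implicit Arguments.
Unset Strict Implicit.
Unset Printing Implicit Defensive.
Local Open Scope ring_scope.
Local Open Scope classical_set_scope.

Lemma head_rev (T : Type) (x : T) s : head x (rev s) = last x s.
Proof. by case/lastP: s => [//|s y]; rewrite rev_rcons last_rcons. Qed.

Lemma last_rev (T : Type) (x : T) s : last x (rev s) = head x s.
Proof. by rewrite -[s in RHS]revK head_rev. Qed.

Section Steps.
Variable V : finType.
Implicit Types (s t : seq V) (x y z : V).
Local Open Scope nat_scope.

Lemma steps_cat s t x : steps (s ++ x :: t) = steps (rcons s x) ++ steps (x :: t).
Proof.
elim: s => [//|a s IH]; rewrite /steps /=.
by case: s IH => [//|b s] IH /=; rewrite -[zip _ _]/(steps (b :: s ++ x :: t)) IH.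
Qed.

Lemma steps_cons x t : steps (x :: t) = zip (belast x t) t.
Proof. by elim: t x => [//|y t IH] x; rewrite /steps /= -IH. Qed.

Lemma steps_rcons s x :
  steps (rcons s x) = if s is [::] then [::] else rcons (steps s) (last x s, x).
Proof.
elim: s => [//|a s IH]; rewrite /steps /=.
case: s IH => [//|b s] IH /=.
by rewrite -[zip (b :: rcons s x) _]/(steps (rcons (b :: s) x)) IH.
Qed.

Lemma steps_rev s : steps (rev s) = rev [seq (e.2, e.1) | e <- steps s].
Proof.
elim: s => [//|a s IH]; rewrite rev_cons steps_rcons.
case: s IH => [//|b s] IH.
have -> : rev (b :: s) = rcons (rev s) b by rewrite rev_cons.
rewrite -(rev_cons b s) IH [steps _]/= map_cons rev_cons.
case E: (rcons (rev s) b) => [|x y]; first by case: (rev s) E.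
by rewrite -E last_rcons rev_cons.
Qed.

Lemma kuv_cat x y s t z :
  kuv x y (s ++ z :: t) = kuv x y (rcons s z) + kuv x y (z :: t).
Proof. by rewrite /kuv steps_cat count_cat. Qed.

Lemma kuv_cons x y a s :
  kuv x y (a :: s) = [&& a == x, head a s == y & s != [::]] + kuv x y s.
Proof. by case: s => [|b s]; rewrite /kuv /= ?andbF ?andbT. Qed.

Lemma kuv_rev x y s : kuv x y (rev s) = kuv y x s.
Proof.
rewrite /kuv steps_rev count_rev count_map; apply: eq_count => -[a b] /=.
by apply/eqP/eqP => -[-> ->].
Qed.

Lemma kuv_notin_l x y s : x \notin s -> kuv x y s = 0.
Proof.
elim: s => [//|a s IH]; rewrite in_cons negb_or => /andP[xa xs].
by rewrite kuv_cons IH // eq_sym (negbTE xa).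
Qed.

Lemma kuv_notin_r x y s : y \notin s -> kuv x y s = 0.
Proof. by move=> ys; rewrite -(revK s) kuv_rev kuv_notin_l // mem_rev. Qed.

End Steps.

Section Excursions.
Variables (V : finType) (u v : V).
Hypothesis huv : u != v.
Implicit Types (s w : seq V) (M : seq (seq V)).
Local Open Scope nat_scope.

Definition leaves_via w := head u w == v.
Definition returns_via w := last u w == v.

Lemma leaves_via_rev w : leaves_via (rev w) = returns_via w.
Proof. by rewrite /leaves_via head_rev. Qed.

Lemma returns_via_rev w : returns_via (rev w) = leaves_via w.
Proof. by rewrite /returns_via last_rev. Qed.

Lemma kuv_uv_cons s : kuv u v (u :: s) = leaves_via s + kuv u v s.
Proof.
rewrite kuv_cons eqxx /leaves_via.
by case: s => [|b s] /=; rewrite ?andbF ?andbT ?(negbTE huv).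
Qed.

Lemma kuv_vu_cons s : kuv v u (u :: s) = kuv v u s.
Proof. by rewrite kuv_cons (negbTE huv). Qed.

Lemma kuv_uv_rcons w : u \notin w -> kuv u v (rcons w u) = 0.
Proof.
by move=> uw; rewrite -[LHS]kuv_rev rev_rcons kuv_vu_cons kuv_notin_r ?mem_rev.
Qed.

Lemma kuv_vu_rcons w : u \notin w -> kuv v u (rcons w u) = returns_via w.
Proof.
move=> uw; rewrite -[LHS]kuv_rev rev_rcons kuv_uv_cons kuv_notin_l ?mem_rev //.
by rewrite addn0 leaves_via_rev.
Qed.

(* [splice w0 M wn] is the path [w0 u w_1 u ... u w_m u wn]: every path through [u]
   is uniquely of this form with [u]-free pieces, the [w_i] being its excursions. *)
Definition splice w0 M wn := w0 ++ u :: flatten [seq rcons w u | w <- M] ++ wn.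

Definition ufree w := u \notin w.

Lemma splice_cons w0 w M wn : splice w0 (w :: M) wn = w0 ++ u :: splice w M wn.
Proof. by rewrite /splice /= -catA cat_rcons. Qed.

Lemma head_splice x w0 M wn : head x (splice w0 M wn) = head u w0.
Proof. by case: w0. Qed.

Lemma last_splice x w0 M wn : last x (splice w0 M wn) = last u wn.
Proof.
rewrite /splice last_cat /= last_cat.
by elim: M => //= w M; rewrite last_cat last_rcons.
Qed.

Lemma spliceP s : u \in s ->
  exists w0 M wn, [/\ ufree w0, all ufree M, ufree wn & s = splice w0 M wn].
Proof.
elim: s => [//|x s IH]; rewrite in_cons.
have [-> _|ux /= us] := eqVneq x u.
  have [us|uns] := boolP (u \in s); last by exists [::], [::], s.
  have [w0 [M [wn [h0 hM hn ->]]]] := IH us.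
  by exists [::], (w0 :: M), wn; rewrite splice_cons /= h0.
have [w0 [M [wn [h0 hM hn ->]]]] := IH us.
by exists (x :: w0), M, wn; rewrite /ufree in_cons negb_or eq_sym ux.
Qed.

Lemma kuv_splice_uv w0 M wn : ufree w0 -> all ufree M -> ufree wn ->
  kuv u v (splice w0 M wn) = count leaves_via M + leaves_via wn.
Proof.
elim: M w0 => [|w M IH] w0 h0 /=.
  move=> _ hn; rewrite /splice /= kuv_cat kuv_uv_rcons //.
  by rewrite kuv_uv_cons kuv_notin_l ?addn0.
case/andP=> hw hM hn; rewrite splice_cons kuv_cat kuv_uv_rcons // kuv_uv_cons IH //.
by rewrite /leaves_via head_splice add0n addnA.
Qed.

Lemma kuv_splice_vu w0 M wn : ufree w0 -> all ufree M -> ufree wn ->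
  kuv v u (splice w0 M wn) = returns_via w0 + count returns_via M.
Proof.
elim: M w0 => [|w M IH] w0 h0 /=.
  move=> _ hn; rewrite /splice /= kuv_cat kuv_vu_rcons //.
  by rewrite kuv_vu_cons kuv_notin_r ?addn0.
by case/andP=> hw hM hn; rewrite splice_cons kuv_cat kuv_vu_rcons // kuv_vu_cons IH.
Qed.

Fixpoint pieces s : seq (seq V) :=
  if s is x :: s' then
    let L := pieces s' in
    if x == u then [::] :: L else (x :: head [::] L) :: behead L
  else [:: [::]].

Lemma pieces_ufree w : ufree w -> pieces w = [:: w].
Proof.
elim: w => [//|x w IH]; rewrite /ufree in_cons negb_or => /andP[ux uw] /=.
by rewrite IH // eq_sym (negbTE ux).
Qed.

Lemma pieces_cat w s : ufree w -> pieces (w ++ u :: s) = w :: pieces s.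
Proof.
elim: w => [|x w IH]; first by rewrite /= eqxx.
rewrite /ufree in_cons negb_or => /andP[ux uw] /=.
by rewrite IH // eq_sym (negbTE ux).
Qed.

Lemma pieces_splice w0 M wn : ufree w0 -> all ufree M -> ufree wn ->
  pieces (splice w0 M wn) = w0 :: rcons M wn.
Proof.
elim: M w0 => [|w M IH] w0 h0 /=; first by move=> _ hn; rewrite pieces_cat ?pieces_ufree.
by case/andP=> hw hM hn; rewrite splice_cons pieces_cat // IH.
Qed.

Lemma splice_inj w0 M wn w0' M' wn' :
  ufree w0 -> all ufree M -> ufree wn -> ufree w0' -> all ufree M' -> ufree wn' ->
  splice w0 M wn = splice w0' M' wn' -> [/\ w0 = w0', M = M' & wn = wn'].
Proof.
move=> h0 hM hn h0' hM' hn' /(congr1 pieces).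
by rewrite !pieces_splice // => -[-> /rcons_inj[-> ->]].
Qed.

End Excursions.

Definition rev_related {T : eqType} (w w' : seq T) := (w' == w) || (w' == rev w).

Section Reorientation.
Variables (V : finType) (u v : V).
Local Notation leaves_via := (leaves_via u v).
Local Notation returns_via := (returns_via u v).
Implicit Types (w : seq V) (M : seq (seq V)) (bs : seq bool).
Local Open Scope nat_scope.

Definition flippable w := leaves_via w != returns_via w.
Definition two_sided w := leaves_via w && returns_via w.
Definition orientation M := [seq leaves_via w | w <- M & flippable w].
Definition canon w := if flippable w && ~~ leaves_via w then rev w else w.

(* [bs] prescribes, in order, whether each flippable excursion of [M] leaves via [v]. *)
Fixpoint reorient bs M : seq (seq V) :=
  if M is w :: M' then
    if flippable w then
      if bs is b :: bs' then (if b == leaves_via w then w else rev w) :: reorient bs' M'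
      else w :: reorient bs M'
    else w :: reorient bs M'
  else [::].

Lemma flippable_rev w : flippable (rev w) = flippable w.
Proof. by rewrite /flippable leaves_via_rev returns_via_rev eq_sym. Qed.

Lemma two_sided_rev w : two_sided (rev w) = two_sided w.
Proof. by rewrite /two_sided leaves_via_rev returns_via_rev andbC. Qed.

Lemma size_orientation M : size (orientation M) = count flippable M.
Proof. by rewrite size_map size_filter. Qed.

Lemma count_leaves_via M :
  count leaves_via M = count two_sided M + count id (orientation M).
Proof.
rewrite /orientation; elim: M => [//|w M IH] /=; rewrite IH /flippable /two_sided.
by case L: (leaves_via w); case E: (returns_via w); rewrite /= ?L ?E; lia.
Qed.

Lemma count_returns_via M :
  count returns_via M = count two_sided M + count negb (orientation M).
Proof.
rewrite /orientation; elim: M => [//|w M IH] /=; rewrite IH /flippable /two_sided.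
by case L: (leaves_via w); case E: (returns_via w); rewrite /= ?L ?E; lia.
Qed.

Lemma reorient_rev_related bs M : all2 rev_related M (reorient bs M).
Proof.
elim: M bs => [//|w M IH] bs /=.
case: (flippable w); last by rewrite /rev_related eqxx IH.
case: bs => [|b bs]; first by rewrite /rev_related eqxx IH.
by case: (b == leaves_via w); rewrite /rev_related eqxx ?orbT IH.
Qed.

Lemma rev_related_count (p : pred (seq V)) M M' :
  (forall w, p (rev w) = p w) -> all2 rev_related M M' -> count p M' = count p M.
Proof.
move=> prev; elim: M M' => [|w M IH] [|w' M'] //= /andP[r a].
by rewrite (IH _ a); case/orP: r => /eqP ->; rewrite ?prev.
Qed.

Lemma rev_related_all (p : pred (seq V)) M M' :
  (forall w, p (rev w) = p w) -> all2 rev_related M M' -> all p M' = all p M.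
Proof.
move=> prev; elim: M M' => [|w M IH] [|w' M'] //= /andP[r a].
by rewrite (IH _ a); case/orP: r => /eqP ->; rewrite ?prev.
Qed.

Lemma orientation_reorient bs M :
  size bs = count flippable M -> orientation (reorient bs M) = bs.
Proof.
elim: M bs => [|w M IH] bs /=; first by case: bs.
case F: (flippable w) => /=; last by move/IH; rewrite /orientation /= F.
case: bs => [//|b bs] /= [] /IH H.
case E: (b == leaves_via w);
  rewrite /orientation /= ?flippable_rev F /= -/(orientation _) H.
  by rewrite (eqP E).
move: E F; rewrite leaves_via_rev /flippable.
by case: b; case: (leaves_via w); case: (returns_via w).
Qed.

Lemma map_canon_reorient bs M : map canon (reorient bs M) = map canon M.
Proof.
elim: M bs => [//|w M IH] bs /=.
case F: (flippable w) => /=; last by rewrite IH.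
case: bs => [|b bs]; first by rewrite /= IH.
case: (b == leaves_via w); rewrite /= IH //; congr (_ :: _).
rewrite /canon flippable_rev F leaves_via_rev /=.
move: F; rewrite /flippable.
by case: (leaves_via w); case: (returns_via w); rewrite //= revK.
Qed.

Lemma reorient_orientation M : reorient (orientation M) M = M.
Proof.
elim: M => [//|w M IH]; rewrite /orientation /=.
by case: (flippable w) => /=; rewrite ?eqxx -/(orientation M) IH.
Qed.

Lemma reorient_canon bs M :
  size bs = count flippable M -> reorient bs (map canon M) = reorient bs M.
Proof.
have flippable_canon w : flippable (canon w) = flippable w.
  by rewrite /canon; case: ifP; rewrite ?flippable_rev.
elim: M bs => [//|w M IH] bs /=.
rewrite flippable_canon; case F: (flippable w) => /=; last first.
  by move/IH ->; rewrite /canon F.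
case: bs => [//|b bs] /= [] /IH ->; congr (_ :: _).
rewrite /canon F /=; case L: (leaves_via w) => /=; first by rewrite L.
rewrite leaves_via_rev revK; move: F; rewrite /flippable L.
by case: (returns_via w) => // _; case: b.
Qed.

Lemma canon_orientation_inj M M' :
  map canon M = map canon M' -> orientation M = orientation M' -> M = M'.
Proof.
move=> hc ho; rewrite -(reorient_orientation M) -reorient_canon ?size_orientation //.
by rewrite hc ho reorient_canon ?size_orientation // reorient_orientation.
Qed.

Lemma perm_splice_rev_related w0 M M' wn : all2 rev_related M M' ->
  perm_eq (splice u w0 M' wn) (splice u w0 M wn).
Proof.
move=> r; rewrite /splice perm_cat2l perm_cons perm_cat2r.
elim: M M' r => [|w M IH] [|w' M'] //= /andP[r a].
apply: perm_cat; last exact: IH.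
case/orP: r => /eqP -> //.
by rewrite perm_rcons perm_sym perm_rcons perm_cons perm_sym perm_rev.
Qed.

End Reorientation.

Section JumpWeight.
Variables (R : realType) (V : finType) (c : V -> V -> R).
Implicit Types (s t w : seq V) (M : seq (seq V)).

Definition jump_weight s : R := \prod_(e <- steps s) pjump c e.1 e.2.

Lemma jump_weight_cat s t x :
  jump_weight (s ++ x :: t) = jump_weight (rcons s x) * jump_weight (x :: t).
Proof. by rewrite /jump_weight steps_cat big_cat. Qed.

Lemma jump_weight_splice u w0 M wn :
  jump_weight (splice u w0 M wn) = jump_weight (rcons w0 u) *
    \prod_(w <- M) jump_weight (u :: rcons w u) * jump_weight (u :: wn).
Proof.
elim: M w0 => [|w M IH] w0; first by rewrite /splice /= jump_weight_cat big_nil mulr1.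
rewrite splice_cons jump_weight_cat -[u :: _]/(splice u (u :: w) M wn) IH big_cons.
by rewrite !mulrA.
Qed.

Hypothesis c_sym : forall x y, c x y = c y x.

(* With symmetric conductances, [pjump c x y] and [pjump c y x] differ only in the
   normalisations [cout x], [cout y]; along a closed walk every vertex occurs as
   often as a departure point as it does as an arrival point. *)
Lemma jump_weight_rev_cycle x t :
  last x t = x -> jump_weight (rev (x :: t)) = jump_weight (x :: t).
Proof.
move=> hl; rewrite /jump_weight steps_rev big_rev big_map /=.
pose c' y z := if y == z then 0 else c y z.
have pjumpE y z : pjump c y z = c' y z / cout c y.
  by rewrite /pjump /c'; case: ifP; rewrite ?mul0r.
rewrite (eq_bigr (fun e => c' e.1 e.2 / cout c e.2)); last first.
  by move=> e _; rewrite pjumpE /c' eq_sym c_sym.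
rewrite [RHS](eq_bigr (fun e => c' e.1 e.2 / cout c e.1)); last first.
  by move=> e _; rewrite pjumpE.
rewrite !big_split /=; congr (_ * _).
rewrite -(big_map snd xpredT (fun y => (cout c y)^-1)).
rewrite -(big_map fst xpredT (fun y => (cout c y)^-1)).
rewrite steps_cons -/(unzip1 _) -/(unzip2 _).
rewrite unzip1_zip ?size_belast // unzip2_zip ?size_belast //.
apply: perm_big; rewrite -(perm_cons x).
by have := lastI x t; rewrite hl => ->; rewrite perm_rcons.
Qed.

Lemma jump_weight_splice_rev_related u w0 M M' wn : all2 rev_related M M' ->
  jump_weight (splice u w0 M' wn) = jump_weight (splice u w0 M wn).
Proof.
move=> r; rewrite !jump_weight_splice; congr (_ * _ * _).
elim: M M' r => [|w M IH] [|w' M'] //= /andP[r a]; rewrite !big_cons IH //.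
case/orP: r => /eqP -> //; congr (_ * _).
by rewrite -jump_weight_rev_cycle ?last_rcons // rev_cons rev_rcons revK.
Qed.

End JumpWeight.

Lemma muPG_perm_eq (R : realType) (V : finType) (c : V -> V -> R) v0 ell (P Q : seq V) :
  perm_eq P Q -> jump_weight c P = jump_weight c Q -> muPG c v0 ell P = muPG c v0 ell Q.
Proof.
move=> /permP pe hw; rewrite /muPG /path_prob /fP -/(jump_weight c P) -/(jump_weight c Q).
rewrite hw (pe (pred1 v0)); congr (_ * _).
by apply: eq_bigr => x _; rewrite (pe (pred1 x)).
Qed.

Lemma Omega_perm_eq (V : finType) (v0 : V) (P Q : seq V) :
  perm_eq Q P -> head v0 Q = head v0 P -> last v0 Q = last v0 P ->
  Omega v0 P -> Omega v0 Q.
Proof.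
move=> pe hh hl [hd ls sz allv]; split; rewrite ?hh ?hl ?(perm_size pe) //.
by move=> x; rewrite (perm_mem pe).
Qed.

Section SwapInto.
Variables (T : eqType) (x0 : T) (s : seq T) (p : pred T).
Hypothesis few_p : (count p s <= count (predC p) s)%N.

(* Matches the [i]-th element of [s] satisfying [p] with the [i]-th one that does not. *)
Definition swap_into x := nth x0 [seq y <- s | ~~ p y] (index x [seq y <- s | p y]).

Lemma swap_into_mem x : x \in s -> p x -> swap_into x \in [seq y <- s | ~~ p y].
Proof.
move=> xs px; apply: mem_nth; rewrite size_filter; apply: leq_trans few_p.
by rewrite -size_filter index_mem mem_filter px.
Qed.

Lemma swap_into_inj : uniq s -> {in [seq y <- s | p y] &, injective swap_into}.
Proof.
move=> us x y xs ys; rewrite /swap_into => /eqP.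
have lt_index z : z \in [seq y <- s | p y] ->
    (index z [seq y <- s | p y] < size [seq y <- s | ~~ p y])%N.
  move=> zs; rewrite size_filter; apply: leq_trans few_p.
  by rewrite -size_filter index_mem.
rewrite nth_uniq ?filter_uniq ?lt_index // => /eqP eq_index.
by rewrite -(nth_index x0 xs) eq_index nth_index.
Qed.

End SwapInto.

Fixpoint bool_seqs n : seq (seq bool) :=
  if n is n'.+1 then
    [seq true :: s | s <- bool_seqs n'] ++ [seq false :: s | s <- bool_seqs n']
  else [:: [::]].

Lemma mem_bool_seqs n s : (s \in bool_seqs n) = (size s == n).
Proof.
have mem_cons_map (b b' : bool) t L :
    (b :: t \in [seq b' :: x | x <- L]) = (b == b') && (t \in L).
  by apply/mapP/andP => [[x xL [-> ->]]|[/eqP -> tL]]; [rewrite eqxx | exists t].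
elim: n s => [|n IH] [|b s] //=; first by rewrite mem_cat; apply/negP => /orP[] /mapP [].
by rewrite mem_cat !mem_cons_map IH eqSS; case: b; case: (size s == n).
Qed.

Lemma uniq_bool_seqs n : uniq (bool_seqs n).
Proof.
elim: n => [//|n IH] /=.
rewrite cat_uniq !map_inj_uniq; try by move=> x y [].
rewrite IH andbT /=; by apply/hasP => -[x /mapP [y _ ->] /mapP [z _]].
Qed.

Lemma size_bool_seqs n : size (bool_seqs n) = (2 ^ n)%N.
Proof. by elim: n => [//|n IH] /=; rewrite size_cat !size_map IH expnS mul2n addnn. Qed.

Section Balancing.
Variable R : realType.

Lemma count_mul_le_sum (T : Type) (P : pred T) (f : T -> R) m s :
  (forall x, P x -> m <= f x) -> (forall x, 0 <= f x) ->
  (count P s)%:R * m <= \sum_(x <- s) f x.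
Proof.
move=> Pm f0; elim: s => [|x s IH]; first by rewrite big_nil mul0r.
rewrite big_cons /=; case Px: (P x) => /=.
  by rewrite natrD mulrDl mul1r lerD // Pm.
by rewrite add0n -[X in X <= _]add0r lerD.
Qed.

Definition bias (bs : seq bool) : R := (count id bs)%:R - (count negb bs)%:R.

Lemma sum_bias_sqr n : \sum_(bs <- bool_seqs n) bias bs ^+ 2 = n%:R * 2 ^+ n.
Proof.
elim: n => [|n IH]; first by rewrite big_seq1 /bias subrr expr0n mul0r.
rewrite /= big_cat /= !big_map -big_split /=.
rewrite (eq_bigr (fun bs => 2 * bias bs ^+ 2 + 2)); last first.
  by move=> bs _; rewrite /bias /= !natrD; ring.
rewrite big_split /= -mulr_sumr IH big_const_seq count_predT size_bool_seqs.
by rewrite iter_addr_0 -[2 *+ _]mulr_natr natrX exprS -natr1; ring.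
Qed.

Variables (k : nat) (e1 e2 : bool) (B : nat).
Hypothesis k_ge184 : (184 <= k)%N.

Definition unbalanced_bits (bs : seq bool) : bool :=
  k%:R / 3 <= `|((e1 + B + count id bs)%N%:R : R) - (e2 + B + count negb bs)%N%:R|.

Lemma unbalanced_bits_bias bs : unbalanced_bits bs -> (k%:R / 3 - 1) ^+ 2 <= bias bs ^+ 2.
Proof.
rewrite /unbalanced_bits.
have -> : ((e1 + B + count id bs)%N%:R : R) - (e2 + B + count negb bs)%N%:R
          = (e1%:R - e2%:R) + bias bs by rewrite /bias !natrD; ring.
have le_e : `|(e1%:R - e2%:R : R)| <= 1.
  by case: e1; case: e2; rewrite /= ?subrr ?normr0 ?subr0 ?sub0r ?normrN ?normr1.
have k_ge : (184 : R) <= k%:R by rewrite (ler_nat R 184 k).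
move=> H; have le_bias : k%:R / 3 - 1 <= `|bias bs|.
  by have := ler_normD (e1%:R - e2%:R : R) (bias bs); lra.
rewrite -[bias bs ^+ 2]real_normK ?num_real // !expr2.
by apply: ler_pM => //; lra.
Qed.

(* Chebyshev: the squared bias has mean [a] over the [2 ^ a] sign sequences,
   while an unbalanced one has squared bias at least [(k/3 - 1)^2 >= 2 k >= 2 a]. *)
Lemma count_unbalanced_bits a : k = (e1 + e2 + 2 * B + a)%N ->
  (count unbalanced_bits (bool_seqs a) <= count (predC unbalanced_bits) (bool_seqs a))%N.
Proof.
move=> kE; set cb := count _ _.
have := count_predC unbalanced_bits (bool_seqs a); rewrite size_bool_seqs => total.
suff : (2 * cb <= 2 ^ a)%N by lia.
have cb_le : cb%:R * (k%:R / 3 - 1) ^+ 2 <= a%:R * 2 ^+ a :> R.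
  rewrite -sum_bias_sqr; apply: count_mul_le_sum => bs; last exact: sqr_ge0.
  exact: unbalanced_bits_bias.
have k_ge : (184 : R) <= k%:R by rewrite (ler_nat R 184 k).
have a_le : (a%:R : R) <= k%:R by rewrite ler_nat kE; lia.
have pow_ge0 : (0 : R) <= 2 ^+ a by rewrite exprn_ge0.
have sq_ge : 2 * k%:R <= (k%:R / 3 - 1) ^+ 2 :> R by nra.
rewrite -(ler_nat R) natrM natrX; nra.
Qed.

Definition balanced_bits bs := swap_into [::] (bool_seqs (size bs)) unbalanced_bits bs.

Lemma balanced_bits_spec bs : k = (e1 + e2 + 2 * B + size bs)%N -> unbalanced_bits bs ->
  size (balanced_bits bs) = size bs /\ ~~ unbalanced_bits (balanced_bits bs).
Proof.
move=> kE ubs; have := swap_into_mem [::] (count_unbalanced_bits kE).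
move/(_ bs); rewrite mem_bool_seqs eqxx => /(_ isT ubs).
by rewrite mem_filter mem_bool_seqs => /andP[-> /eqP ->].
Qed.

Lemma balanced_bits_inj bs bs' : k = (e1 + e2 + 2 * B + size bs)%N ->
  size bs' = size bs -> unbalanced_bits bs -> unbalanced_bits bs' ->
  balanced_bits bs = balanced_bits bs' -> bs = bs'.
Proof.
move=> kE hs ubs ubs'; rewrite /balanced_bits hs.
apply: (swap_into_inj (count_unbalanced_bits kE) (uniq_bool_seqs _));
  by rewrite mem_filter mem_bool_seqs ?hs eqxx andbT.
Qed.

End Balancing.

Section Rebalancing.
Variables (R : realType) (V : finType) (u v : V) (k : nat).
Hypotheses (huv : u != v) (k_ge184 : (184 <= k)%N).
Local Notation ufree := (ufree u).
Local Notation splice := (splice u).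
Local Notation leaves_via := (leaves_via u v).
Local Notation returns_via := (returns_via u v).
Local Notation two_sided := (two_sided u v).
Local Notation orientation := (orientation u v).
Local Notation reorient := (reorient u v).
Implicit Types (P Q : seq V) (M : seq (seq V)).

Definition in_fiber P := (kuv u v P + kuv v u P)%N = k.
Definition unbalanced P : bool := k%:R / 3 <= `|(kuv u v P)%:R - (kuv v u P)%:R : R|.

Definition balanced_orientation w0 M wn :=
  balanced_bits R k (leaves_via wn) (returns_via w0) (count two_sided M) (orientation M).

Definition rebalance P :=
  if pieces u P is w0 :: r :: rs then
    splice w0 (reorient (balanced_orientation w0 (belast r rs) (last r rs)) (belast r rs))
      (last r rs)
  else P.

Lemma rebalance_splice w0 M wn : ufree w0 -> all ufree M -> ufree wn ->
  rebalance (splice w0 M wn) = splice w0 (reorient (balanced_orientation w0 M wn) M) wn.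
Proof.
move=> h0 hM hn; rewrite /rebalance pieces_splice //.
case E: (rcons M wn) => [|r rs]; first by case: M E {hM}.
by have := lastI r rs; rewrite -E => /rcons_inj [-> ->].
Qed.

Lemma in_fiber_splice w0 M wn : ufree w0 -> all ufree M -> ufree wn ->
  in_fiber (splice w0 M wn) <->
  k = (leaves_via wn + returns_via w0 + 2 * count two_sided M + size (orientation M))%N.
Proof.
move=> h0 hM hn; rewrite /in_fiber kuv_splice_uv // kuv_splice_vu //.
rewrite count_leaves_via count_returns_via.
have : (count id (orientation M) + count negb (orientation M))%N = size (orientation M).
  by rewrite -(count_predC id).
by split; lia.
Qed.

Lemma unbalanced_splice w0 M wn : ufree w0 -> all ufree M -> ufree wn ->
  unbalanced (splice w0 M wn) =
  unbalanced_bits R k (leaves_via wn) (returns_via w0) (count two_sided M)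
    (orientation M).
Proof.
move=> h0 hM hn; rewrite /unbalanced kuv_splice_uv // kuv_splice_vu //.
rewrite count_leaves_via count_returns_via /unbalanced_bits addnA.
by rewrite [X in X%:R - _]addnC addnA.
Qed.

Lemma reorient_balanced w0 M wn : ufree w0 -> all ufree M -> ufree wn ->
  in_fiber (splice w0 M wn) -> unbalanced (splice w0 M wn) ->
  let bs := balanced_orientation w0 M wn in let M' := reorient bs M in
  [/\ all ufree M', orientation M' = bs, count two_sided M' = count two_sided M,
      size bs = size (orientation M)
    & ~~ unbalanced_bits R k (leaves_via wn) (returns_via w0) (count two_sided M) bs].
Proof.
move=> h0 hM hn /in_fiber_splice kE; rewrite unbalanced_splice // => ub bs M'.
have [sz bal] := balanced_bits_spec k_ge184 (kE h0 hM hn) ub.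
have r := reorient_rev_related u v bs M.
split => //.
- by rewrite (rev_related_all _ r) // => w; rewrite /ufree mem_rev.
- by rewrite orientation_reorient // sz size_orientation.
- exact: rev_related_count (two_sided_rev u v) r.
Qed.

Lemma rebalance_balanced P : u \in P -> in_fiber P -> unbalanced P ->
  in_fiber (rebalance P) /\ ~~ unbalanced (rebalance P).
Proof.
case/spliceP=> w0 [M [wn [h0 hM hn ->]]] hf hb.
have [hM' oE tE sz bal] := reorient_balanced h0 hM hn hf hb.
move/in_fiber_splice: hf => /(_ h0 hM hn) kE.
rewrite rebalance_splice //; split; last by rewrite unbalanced_splice // oE tE.
by apply/in_fiber_splice => //; rewrite oE tE sz.
Qed.

Lemma rebalance_inj P Q : u \in P -> u \in Q ->
  in_fiber P -> unbalanced P -> in_fiber Q -> unbalanced Q ->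
  rebalance P = rebalance Q -> P = Q.
Proof.
case/spliceP=> w0 [M [wn [h0 hM hn ->]]]; case/spliceP=> w0' [M' [wn' [h0' hM' hn' ->]]].
move=> hf hb hf' hb'.
have [hN oN tN szN _] := reorient_balanced h0 hM hn hf hb.
have [hN' oN' tN' szN' _] := reorient_balanced h0' hM' hn' hf' hb'.
rewrite !rebalance_splice // => /(splice_inj h0 hN hn h0' hN' hn') [E0 EM En].
subst w0' wn'.
have tE : count two_sided M' = count two_sided M by rewrite -tN' -EM tN.
have bE : balanced_orientation w0 M wn = balanced_orientation w0 M' wn.
  by rewrite -oN EM oN'.
have oE : orientation M = orientation M'.
  move/in_fiber_splice: hf => /(_ h0 hM hn) kE.
  rewrite unbalanced_splice // in hb; rewrite unbalanced_splice // tE in hb'.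
  apply: (balanced_bits_inj k_ge184 kE _ hb hb').
    by rewrite -szN -szN' bE.
  by rewrite /balanced_orientation tE in bE.
have cE : map (canon u v) M = map (canon u v) M'.
  rewrite -(map_canon_reorient u v (balanced_orientation w0 M wn) M) EM.
  exact: map_canon_reorient.
by rewrite (canon_orientation_inj cE oE).
Qed.

Lemma rebalance_invariant (c : V -> V -> R) P x : (forall x y, c x y = c y x) ->
  [/\ perm_eq (rebalance P) P, head x (rebalance P) = head x P,
      last x (rebalance P) = last x P & jump_weight c (rebalance P) = jump_weight c P].
Proof.
move=> c_sym; have [uP|uP] := boolP (u \in P); last first.
  by rewrite /rebalance pieces_ufree.
case/spliceP: uP => w0 [M [wn [h0 hM hn ->]]].
have r := reorient_rev_related u v (balanced_orientation w0 M wn) M.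
rewrite rebalance_splice // !head_splice !last_splice; split => //.
- exact: perm_splice_rev_related.
- exact: jump_weight_splice_rev_related.
Qed.

End Rebalancing.

Section EsumInjection.
Variables (R : realType) (T : choiceType).
Local Open Scope ereal_scope.

Lemma le_esum_subset (X Y : set T) (f : T -> \bar R) :
  (forall x, 0 <= f x) -> X `<=` Y -> \esum_(i in X) f i <= \esum_(i in Y) f i.
Proof.
move=> f0 XY; rewrite (esumID X Y) // (_ : Y `&` X = X).
  by rewrite leeDl // esum_ge0.
by apply/seteqP; split=> [x []//|x Xx]; split=> //; apply: XY.
Qed.

Lemma esum_double_le (A F : set T) (f : T -> \bar R) (phi : T -> T) :
  (forall x, 0 <= f x) -> A `<=` F -> set_inj A phi ->
  (forall x, A x -> (F `\` A) (phi x) /\ f (phi x) = f x) ->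
  \esum_(i in A) f i + \esum_(i in A) f i <= \esum_(i in F) f i.
Proof.
move=> f0 AF phi_inj phiA; rewrite [leRHS](esumID A) // (_ : F `&` A = A); last first.
  by apply/seteqP; split=> [x []//|x Ax]; split=> //; apply: AF.
apply: leeD => //; rewrite (eq_esum (b := f \o phi)); last first.
  by move=> x /phiA[_ E]; rewrite /= E.
rewrite -(esum_image _ _ f phi_inj); apply: le_esum_subset => // _ [x /phiA[? _] <-].
by [].
Qed.

End EsumInjection.

Section Weights.
Variables (R : realType) (V : finType) (c : V -> V -> R).
Hypothesis c_ge0 : forall x y, 0 <= c x y.
Variables (v0 : V) (ell : V -> R).
Hypothesis ell_gt0 : forall v, 0 < ell v.

Lemma cout_ge0 x : 0 <= cout c x.
Proof. exact: sumr_ge0. Qed.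

Lemma muPG_ge0 P : 0 <= muPG c v0 ell P.
Proof.
have pjump_ge0 x y : 0 <= pjump c x y.
  by rewrite /pjump; case: ifP => // _; rewrite divr_ge0 ?cout_ge0.
rewrite /muPG /path_prob /fP; apply: mulr_ge0; first apply: mulr_ge0.
- by apply: prodr_ge0 => e _.
- by rewrite divr_ge0 // mulr_ge0 ?expR_ge0 // exprn_ge0 // mulr_ge0 ?cout_ge0 ?ltW.
- apply: prodr_ge0 => w _; rewrite /gamma_dens; case: (count _ _) => [//|n].
  by rewrite divr_ge0 // !mulr_ge0 ?expR_ge0 ?exprn_ge0 ?cout_ge0 ?ltW.
Qed.

Lemma nu_le_half (A F : set (seq V)) : A `<=` F ->
  (\esum_(P in A `&` Omega v0) (muPG c v0 ell P)%:E +
   \esum_(P in A `&` Omega v0) (muPG c v0 ell P)%:E <=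
   \esum_(P in F `&` Omega v0) (muPG c v0 ell P)%:E)%E ->
  nu c v0 ell A <= 1 / 2 * nu c v0 ell F.
Proof.
move=> AF; rewrite /nu.
set ea := esum _ _; set eb := esum _ _; set eT := esum _ _ => le_ab.
have f0 P : (0 <= (muPG c v0 ell P)%:E)%E by rewrite lee_fin muPG_ge0.
have [->|T_neq0] := eqVneq (fine eT) 0; first by rewrite invr0 !mulr0.
have T_ge0 : (0 <= eT)%E by apply: esum_ge0.
have T_fin : eT \is a fin_num by move: T_ge0 T_neq0; case: eT => //= _; rewrite eqxx.
have fin_sub (X : set (seq V)) :
    (\esum_(P in X `&` Omega v0) (muPG c v0 ell P)%:E)%E \is a fin_num.
  have le_T : (\esum_(P in X `&` Omega v0) (muPG c v0 ell P)%:E <= eT)%E.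
    by apply: le_esum_subset => // P [].
  by rewrite ge0_fin_numE ?esum_ge0 // (le_lt_trans le_T) // -ge0_fin_numE.
have T_gt0 : 0 < fine eT by rewrite lt_def T_neq0 fine_ge0.
have : fine ea + fine ea <= fine eb by rewrite -lee_fin EFinD !fineK ?fin_sub.
by rewrite mulrA ler_pM2r ?invr_gt0 //; lra.
Qed.

End Weights.

Lemma rebalance_set_inj (R : realType) (V : finType) (u v : V) (k : nat) (v0 : V) :
  u != v -> (184 <= k)%N ->
  set_inj ([set P | in_fiber u v k P /\ unbalanced R u v k P] `&` Omega v0)
    (rebalance R u v k).
Proof.
move=> huv hk P Q /set_mem[[fP bP] [_ _ _ allP]] /set_mem[[fQ bQ] [_ _ _ allQ]].
exact: (rebalance_inj huv hk (allP u) (allQ u) fP bP fQ bQ).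
Qed.

Lemma rebalance_maps (R : realType) (V : finType) (c : V -> V -> R) (u v : V) (k : nat)
    (v0 : V) ell P :
  (forall x y, c x y = c y x) -> u != v -> (184 <= k)%N ->
  let A := [set P | in_fiber u v k P /\ unbalanced R u v k P] `&` Omega v0 in
  A P -> (([set P | in_fiber u v k P] `&` Omega v0) `\` A) (rebalance R u v k P) /\
         muPG c v0 ell (rebalance R u v k P) = muPG c v0 ell P.
Proof.
move=> c_sym huv hk A [[fP bP] omP]; have [_ _ _ allP] := omP.
have [fQ bQ] := rebalance_balanced huv hk (allP u) fP bP.
have [pe hh hl jw] := @rebalance_invariant R V u v k c P v0 c_sym.
split; last exact: muPG_perm_eq pe jw.
split; last by case=> -[_ ub] _; rewrite ub in bQ.
by split=> //; apply: Omega_perm_eq pe hh hl omP.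
Qed.

Theorem lemma4p8 (R : realType) (V : finType) (c : V -> V -> R)
  (c_sym : forall x y, c x y = c y x) (c_ge0 : forall x y, 0 <= c x y)
  (c_conn : connected_network c)
  (v0 : V) (ell : V -> R) (ell_gt0 : forall v, 0 < ell v)
  (u v : V) (huv : u != v) (k : nat) (hk : (184 <= k)%N) :
  nu c v0 ell
    [set P | (kuv u v P + kuv v u P)%N = k /\
             (k%:R / 3 : R) <= `|(kuv u v P)%:R - (kuv v u P)%:R : R| ]
  <= 1 / 2 * nu c v0 ell [set P | (kuv u v P + kuv v u P)%N = k].
Proof.
apply: (nu_le_half c_ge0 ell_gt0); first by move=> P [].
apply: (esum_double_le (phi := rebalance R u v k)).
- by move=> P; rewrite lee_fin muPG_ge0.
- by move=> P [[]].
- exact: rebalance_set_inj.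
- by move=> P /(rebalance_maps ell c_sym huv hk) [? ->].
Qed.
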